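(* Let $c\ge0$, $n\ge 0$, and assume $q:=c^2/\chi_n(c)<1$. Define $U$ on $[0,S_q(0)]$ by the relation $$\psi_{n,c}(x)=\varphi(x)\,U(S_q(x)),\qquad \varphi(x)=(1-x^2)^{-1/4}(1-qx^2)^{-1/4},\quad x\in[0,1).$$ Then there exists a function $F=F_q$, continuous on $[0,S_q(0)]$ and depending only on $q$, satisfying $$|F(s)|\le \frac{3}{(1-q)^3}\quad\text{for all } s\in[0,S_q(0)],$$ such that $U$ solves $$U''(s)+\Big(\chi_n(c)+\frac{1}{4s^2}\Big)U(s)=F(s)\,U(s),\qquad s\in(0,S_q(0)].$$
   Context: Fix a bandwidth $c\ge 0$. The prolate spheroidal wave functions (PSWFs) $\psi_{n,c}$, $n\ge0$, are the solutions on $[-1,1]$, bounded as $|x|\to1^-$, of $\frac{d}{dx}\big[(1-x^2)\psi'(x)\big]+(\chi_n(c)-c^2x^2)\psi(x)=0$, where $0\le\chi_0(c)<\chi_1(c)<\cdots$ are the corresponding eigenvalues (so $-\chi_n(c)$ is the eigenvalue of $L_c\psi=(1-x^2)\psi''-2x\psi'-c^2x^2\psi$); one has $n(n+1)\le\chi_n(c)\le n(n+1)+c^2$. They are normalized by $\int_{-1}^1|\psi_{n,c}|^2dx=1$, $\psi_{n,c}$ has the parity of $n$, and the sign is fixed so that $\psi_{n,c}(1)\ge0$. For $0\le q<1$, $S_q(x)=\int_x^1\sqrt{(1-qt^2)/(1-t^2)}\,dt$, a decreasing homeomorphism of $[0,1]$ onto $[0,S_q(0)]$. *)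

From Stdlib Require Import Reals Lra List.
Open Scope R_scope.

(* psi is a C^2 solution on (-1,1) of
   ((1-x^2) psi')' + (chi - c^2 x^2) psi = 0,
   i.e. (1-x^2) psi'' - 2 x psi' + (chi - c^2 x^2) psi = 0. *)
Definition pswf_ode (c chi : R) (psi : R -> R) : Prop :=
  exists psi' psi'' : R -> R,
    forall x, -1 < x < 1 ->
      derivable_pt_lim psi x (psi' x) /\
      derivable_pt_lim psi' x (psi'' x) /\
      (1 - x^2) * psi'' x - 2 * x * psi' x + (chi - c^2 * x^2) * psi x = 0.

(* bounded as |x| -> 1^- (psi being continuous inside, this is boundedness on (-1,1)) *)
Definition bounded_on_open (psi : R -> R) : Prop :=
  exists M, forall x, -1 < x < 1 -> Rabs (psi x) <= M.

Definition is_eigenvalue (c chi : R) : Prop :=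
  exists psi, pswf_ode c chi psi /\ bounded_on_open psi /\
              exists x, -1 < x < 1 /\ psi x <> 0.

Definition is_nth_eigenvalue (c : R) (n : nat) (chi : R) : Prop :=
  is_eigenvalue c chi /\
  exists l : list R, length l = n /\ NoDup l /\
    (forall y, In y l <-> (is_eigenvalue c y /\ y < chi)).

Definition cont_on_closed (f : R -> R) (a b : R) : Prop :=
  forall x, a <= x <= b -> forall eps, eps > 0 ->
    exists d, d > 0 /\ forall y, a <= y <= b -> Rabs (y - x) < d ->
      Rabs (f y - f x) < eps.

Definition is_pswf (c : R) (n : nat) (chi : R) (psi : R -> R) : Prop :=
  is_nth_eigenvalue c n chi /\
  pswf_ode c chi psi /\
  bounded_on_open psi /\
  cont_on_closed psi (-1) 1 /\
  (exists pr : Riemann_integrable (fun x => (psi x)^2) (-1) 1, RiemannInt pr = 1) /\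
  (forall x, -1 <= x <= 1 -> psi (- x) = (-1)^n * psi x) /\
  psi 1 >= 0.

(* S = S_q, S_q(x) = int_x^1 sqrt((1-q t^2)/(1-t^2)) dt (improper at 1),
   characterized as the antiderivative of -sqrt(...) on (-1,1)
   with S(1) = 0 and S(x) -> 0 as x -> 1^-. *)
Definition is_Sq (q : R) (S : R -> R) : Prop :=
  S 1 = 0 /\
  (forall x, -1 < x < 1 ->
     derivable_pt_lim S x (- sqrt ((1 - q * x^2) / (1 - x^2)))) /\
  (forall eps, eps > 0 -> exists d, d > 0 /\
     forall x, 1 - d < x < 1 -> Rabs (S x) < eps).

Definition phi (q x : R) : R :=
  Rpower (1 - x^2) (-/4) * Rpower (1 - q * x^2) (-/4).

(* With q = c^2/chi the prolate equation reads ((1-x^2) psi')' + chi (1 - q x^2) psi = 0.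
   Put g = sqrt((1-x^2)(1-q x^2)), so that S_q' = -(1 - q x^2)/g and 1/phi = sqrt g.  The
   Liouville substitution s = S_q(x), U = psi/phi turns the equation into U'' + chi U = V U
   with V = -1/(4 g^2) + P, where P is an explicit rational function of x bounded by
   2/(1-q)^3 on [-1,1]; thus F(s) = 1/(4 s^2) + V(S_q^{-1}(s)).
   The singular part 1/(4 s^2) - 1/(4 g^2) is controlled by S_q = g + O((1-x)^(3/2)) at x = 1:
   both vanish there and (g - S_q)' = sqrt(1-x) k with |k| <= 3/sqrt(1-q).  Writing
   g = sqrt(1-x) gamma and S_q = sqrt(1-x) t, t = gamma - (1-x) delta, the singular part is
   delta (gamma + t) / (4 t^2 gamma^2).  On [0,1) we have gamma, t >= sqrt(1-q) and
   |delta| <= 2/sqrt(1-q), so it is at most 1/(1-q)^2; and it converges as x -> 1 because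
   delta -> -(2/3) k(1).  F(0) is defined as the limit. *)

From Stdlib Require Import Reals Lra List Psatz ClassicalEpsilon Ranalysis5.
Open Scope R_scope.

Lemma dlim_eq (f : R -> R) (x l l' : R) :
  derivable_pt_lim f x l -> l = l' -> derivable_pt_lim f x l'.
Proof. now intros H <-. Qed.

Lemma dlim_square (x : R) : derivable_pt_lim (fun y => y ^ 2) x (2 * x).
Proof. eapply dlim_eq; [apply derivable_pt_lim_pow|]. simpl; ring. Qed.

Lemma dlim_sqrt (f : R -> R) (x l : R) :
  derivable_pt_lim f x l -> 0 < f x ->
  derivable_pt_lim (fun y => sqrt (f y)) x (l / (2 * sqrt (f x))).
Proof.
  intros Hf Hx. assert (0 < sqrt (f x)) by now apply sqrt_lt_R0.
  eapply dlim_eq; [apply (derivable_pt_lim_comp f sqrt); [exact Hf|now apply derivable_pt_lim_sqrt]|].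
  field; lra.
Qed.

Lemma dlim_ln (f : R -> R) (x l : R) :
  derivable_pt_lim f x l -> 0 < f x ->
  derivable_pt_lim (fun y => ln (f y)) x (l / f x).
Proof.
  intros Hf Hx.
  eapply dlim_eq; [apply (derivable_pt_lim_comp f ln); [exact Hf|now apply derivable_pt_lim_ln]|].
  field; lra.
Qed.

Ltac dlim_rational :=
  repeat first
    [ apply derivable_pt_lim_const | apply derivable_pt_lim_id | apply dlim_square
    | apply derivable_pt_lim_plus | apply derivable_pt_lim_minus
    | apply derivable_pt_lim_mult | apply derivable_pt_lim_opp ].

Definition lim_left1 (f : R -> R) (l : R) : Prop :=
  forall eps, eps > 0 -> exists d, d > 0 /\ forall x, 1 - d < x < 1 -> Rabs (f x - l) < eps.

Lemma lim_left1_limit1_in (f : R -> R) (l : R) :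
  lim_left1 f l <-> limit1_in f (fun x => x < 1) l 1.
Proof.
  unfold lim_left1, limit1_in, limit_in; simpl; unfold Rdist.
  split; intros H eps He; destruct (H eps He) as [d [Hd H']]; exists d; split; auto.
  - intros x [Hx1 Hx2]. apply H'. apply Rabs_def2 in Hx2. lra.
  - intros x Hx. apply H'. split; [lra|]. apply Rabs_def1; lra.
Qed.

Lemma lim_left1_plus (f g : R -> R) (a b : R) :
  lim_left1 f a -> lim_left1 g b -> lim_left1 (fun x => f x + g x) (a + b).
Proof. rewrite !lim_left1_limit1_in. apply limit_plus. Qed.

Lemma lim_left1_minus (f g : R -> R) (a b : R) :
  lim_left1 f a -> lim_left1 g b -> lim_left1 (fun x => f x - g x) (a - b).
Proof. rewrite !lim_left1_limit1_in. apply limit_minus. Qed.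

Lemma lim_left1_mult (f g : R -> R) (a b : R) :
  lim_left1 f a -> lim_left1 g b -> lim_left1 (fun x => f x * g x) (a * b).
Proof. rewrite !lim_left1_limit1_in. apply limit_mul. Qed.

Lemma lim_left1_inv (f : R -> R) (a : R) : lim_left1 f a -> a <> 0 -> lim_left1 (fun x => / f x) (/ a).
Proof. rewrite !lim_left1_limit1_in. intros; now apply limit_inv. Qed.

Lemma lim_left1_const (c : R) : lim_left1 (fun _ => c) c.
Proof. intros eps He; exists 1; split; [lra|]; intros; rewrite Rminus_diag, Rabs_R0; lra. Qed.

Lemma lim_left1_scal (f : R -> R) (a k : R) : lim_left1 f a -> lim_left1 (fun x => k * f x) (k * a).
Proof. apply lim_left1_mult, lim_left1_const. Qed.

Lemma lim_left1_continuity_pt (f : R -> R) : continuity_pt f 1 -> lim_left1 f (f 1).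
Proof.
  intros H eps He. destruct (H eps He) as [d [Hd H']]. exists d; split; auto.
  intros x Hx. apply H'. split; [split; [exact I|lra]|].
  simpl; unfold Rdist. apply Rabs_def1; lra.
Qed.

Lemma lim_left1_ext (f g : R -> R) (l : R) :
  (forall x, 0 < x < 1 -> f x = g x) -> lim_left1 f l -> lim_left1 g l.
Proof.
  intros E H eps He. destruct (H eps He) as [d [Hd H']]. exists (Rmin d 1); split.
  { apply Rmin_pos; lra. }
  intros x Hx. pose proof (Rmin_l d 1). pose proof (Rmin_r d 1).
  rewrite <- E by lra. apply H'. lra.
Qed.

Lemma lim_left1_sqr (f : R -> R) (a : R) : lim_left1 f a -> lim_left1 (fun x => f x ^ 2) (a ^ 2).
Proof.
  intros H. replace (a ^ 2) with (a * a) by ring.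
  apply lim_left1_ext with (fun x => f x * f x); [intros; ring|].
  now apply lim_left1_mult.
Qed.

Lemma lim_left1_abs_le (f : R -> R) (l B : R) :
  lim_left1 f l -> (forall x, 0 < x < 1 -> Rabs (f x) <= B) -> Rabs l <= B.
Proof.
  intros H Hb. destruct (Rle_or_lt (Rabs l) B) as [h|h]; auto.
  destruct (H (Rabs l - B)) as [d [Hd H']]; [lra|].
  set (x := Rmax (1 - d/2) (1/2)).
  assert (x < 1) by (unfold x; apply Rmax_lub_lt; lra).
  pose proof (Rmax_l (1 - d/2) (1/2)). pose proof (Rmax_r (1 - d/2) (1/2)).
  specialize (H' x ltac:(unfold x in *; lra)). specialize (Hb x ltac:(unfold x in *; lra)).
  pose proof (Rabs_triang_inv l (f x)). rewrite <- Rabs_Ropp, Ropp_minus_distr in H'. lra.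
Qed.

Lemma nonincreasing_of_deriv_nonpos (f f' : R -> R) (a b : R) :
  (forall y, a < y < b -> derivable_pt_lim f y (f' y)) ->
  (forall y, a < y < b -> f' y <= 0) ->
  forall x y, a < x -> x <= y -> y < b -> f y <= f x.
Proof.
  intros Hd Hn x y Hx Hxy Hy.
  destruct (Req_dec x y) as [->|Hne]; [lra|].
  destruct (MVT_cor2 f f' x y) as [c [Hc1 Hc2]]; [lra| intros c Hc; apply Hd; lra|].
  assert (f' c <= 0) by (apply Hn; lra). nra.
Qed.

Lemma nonneg_of_deriv_nonpos_lim0 (f f' : R -> R) (a : R) :
  (forall y, a < y < 1 -> derivable_pt_lim f y (f' y)) ->
  (forall y, a < y < 1 -> f' y <= 0) ->
  lim_left1 f 0 ->
  forall x, a < x < 1 -> 0 <= f x.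
Proof.
  intros Hd Hn Hl x Hx.
  destruct (Rle_or_lt 0 (f x)) as [h|h]; auto.
  destruct (Hl (- f x)) as [d [Hd0 Hd1]]; [lra|].
  set (y := Rmax x (1 - d/2)).
  pose proof (Rmax_l x (1 - d/2)). pose proof (Rmax_r x (1 - d/2)).
  assert (y < 1) by (unfold y; apply Rmax_lub_lt; lra).
  specialize (Hd1 y ltac:(unfold y in *; lra)).
  pose proof (nonincreasing_of_deriv_nonpos f f' a 1 Hd Hn x y
                ltac:(lra) ltac:(unfold y in *; lra) ltac:(lra)).
  rewrite Rminus_0_r in Hd1. apply Rabs_def2 in Hd1. lra.
Qed.

Definition pow32 (x : R) : R := (1 - x) * sqrt (1 - x).

Lemma pow32_pos (x : R) : x < 1 -> 0 < pow32 x.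
Proof. intros. unfold pow32. apply Rmult_lt_0_compat; [lra| apply sqrt_lt_R0; lra]. Qed.

Lemma derivable_pow32 (y : R) : y < 1 -> derivable_pt_lim pow32 y (- (3/2) * sqrt (1 - y)).
Proof.
  intros Hy. pose proof (sqrt_lt_R0 (1 - y) ltac:(lra)).
  eapply dlim_eq; [apply derivable_pt_lim_mult; [dlim_rational|apply dlim_sqrt; [dlim_rational|lra]]|].
  cbv beta. pose proof (sqrt_sqrt (1 - y) ltac:(lra)) as E.
  set (s := sqrt (1 - y)) in *. rewrite <- E. field. lra.
Qed.

Lemma lim_left1_pow32 : lim_left1 pow32 0.
Proof.
  replace 0 with (pow32 1) by (unfold pow32; ring).
  apply lim_left1_continuity_pt. unfold pow32. reg. lra.
Qed.

(* (2/3) K (1-x)^(3/2) has derivative -K sqrt(1-x). *)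
Lemma ge_neg_pow32_of_deriv_le (f f' : R -> R) (a K : R) :
  (forall y, a < y < 1 -> derivable_pt_lim f y (f' y)) ->
  (forall y, a < y < 1 -> f' y <= K * sqrt (1 - y)) ->
  lim_left1 f 0 ->
  forall x, a < x < 1 -> - (2/3 * K * pow32 x) <= f x.
Proof.
  intros Hd Hb Hl x Hx.
  cut (0 <= f x + 2/3 * K * pow32 x); [lra|].
  apply (nonneg_of_deriv_nonpos_lim0 (fun t => f t + 2/3 * K * pow32 t)
           (fun t => f' t - K * sqrt (1 - t)) a); auto.
  - intros y Hy. eapply dlim_eq.
    + apply derivable_pt_lim_plus; [auto|].
      apply derivable_pt_lim_mult; [dlim_rational|apply derivable_pow32; lra].
    + cbv beta; field.
  - intros y Hy. specialize (Hb y Hy). lra.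
  - rewrite <- (Rplus_0_r 0). apply lim_left1_plus; [exact Hl|].
    rewrite <- (Rmult_0_r (2/3 * K)). apply lim_left1_scal, lim_left1_pow32.
Qed.

Lemma abs_le_pow32_of_deriv_bound (f f' : R -> R) (a K : R) :
  (forall y, a < y < 1 -> derivable_pt_lim f y (f' y)) ->
  (forall y, a < y < 1 -> Rabs (f' y) <= K * sqrt (1 - y)) ->
  lim_left1 f 0 ->
  forall x, a < x < 1 -> Rabs (f x) <= 2/3 * K * pow32 x.
Proof.
  intros Hd Hb Hl x Hx. apply Rabs_le. split.
  - apply (ge_neg_pow32_of_deriv_le f f' a); auto.
    intros y Hy. eapply Rle_trans; [apply Rle_abs|]. auto.
  - cut (- (2/3 * K * pow32 x) <= - f x); [lra|].
    apply (ge_neg_pow32_of_deriv_le (fun y => - f y) (fun y => - f' y) a); auto.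
    + intros y Hy. apply (derivable_pt_lim_opp f); auto.
    + intros y Hy. cbv beta. eapply Rle_trans; [apply Rle_abs|]. rewrite Rabs_Ropp. auto.
    + rewrite <- Ropp_0. apply lim_left1_ext with (fun y => -1 * f y); [intros; ring|].
      replace (- 0) with (-1 * 0) by ring. now apply lim_left1_scal.
Qed.

Lemma Rabs_div_le (a b c : R) : 0 < b -> Rabs a <= c * b -> Rabs (a / b) <= c.
Proof.
  intros Hb Ha. unfold Rdiv. rewrite Rabs_mult, Rabs_inv, (Rabs_pos_eq b) by lra.
  apply (Rmult_le_reg_r b); auto. rewrite Rmult_assoc, Rinv_l by lra. lra.
Qed.

Definition gq (q x : R) : R := sqrt ((1 - x^2) * (1 - q * x^2)).
Definition gammaq (q x : R) : R := sqrt ((1 + x) * (1 - q * x^2)).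
Definition kq (q x : R) : R := (1 - q * x - 2 * q * x^2) / gammaq q x.

Section GqFacts.

Variable q : R.
Hypothesis Hq : 0 <= q < 1.

Lemma one_sub_q_le (x : R) : -1 <= x <= 1 -> 0 < 1 - q <= 1 - q * x^2.
Proof. intros. assert (x^2 <= 1) by nra. nra. Qed.

Lemma gammaq_pos (x : R) : -1 < x <= 1 -> 0 < gammaq q x.
Proof.
  intros Hx. pose proof (one_sub_q_le x ltac:(lra)).
  apply sqrt_lt_R0, Rmult_lt_0_compat; lra.
Qed.

Lemma gq_split (x : R) : -1 <= x <= 1 -> gq q x = sqrt (1 - x) * gammaq q x.
Proof.
  intros Hx. pose proof (one_sub_q_le x Hx). unfold gq, gammaq.
  rewrite <- sqrt_mult; [f_equal; ring|lra|apply Rmult_le_pos; lra].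
Qed.

Lemma gq_pos (x : R) : -1 < x < 1 -> 0 < gq q x.
Proof.
  intros. rewrite gq_split by lra.
  apply Rmult_lt_0_compat; [apply sqrt_lt_R0; lra|apply gammaq_pos; lra].
Qed.

Lemma gq_sq (x : R) : -1 <= x <= 1 -> gq q x * gq q x = (1 - x^2) * (1 - q * x^2).
Proof.
  intros Hx. pose proof (one_sub_q_le x Hx). apply sqrt_sqrt.
  apply Rmult_le_pos; nra.
Qed.

Lemma div_gq_eq (x : R) : -1 < x < 1 -> (1 - q * x^2) / gq q x = gq q x / (1 - x^2).
Proof.
  intros Hx. pose proof (one_sub_q_le x ltac:(lra)). assert (0 < 1 - x^2) by nra.
  pose proof (gq_pos x Hx).
  replace ((1 - q * x^2) / gq q x) with ((1 - x^2) * (1 - q * x^2) / ((1 - x^2) * gq q x))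
    by (field; lra).
  rewrite <- gq_sq by lra. field. lra.
Qed.

Lemma sqrt_Sq_integrand (x : R) : -1 < x < 1 ->
  sqrt ((1 - q * x^2) / (1 - x^2)) = (1 - q * x^2) / gq q x.
Proof.
  intros Hx. pose proof (one_sub_q_le x ltac:(lra)). assert (Hx2 : 0 < 1 - x^2) by nra.
  pose proof (sqrt_lt_R0 _ Hx2). pose proof (sqrt_lt_R0 (1 - q * x^2) ltac:(lra)).
  unfold gq. rewrite sqrt_mult, sqrt_div by lra.
  rewrite <- (sqrt_sqrt (1 - q * x^2)) at 2 by lra. field. lra.
Qed.

Lemma derivable_gq (x : R) : -1 < x < 1 ->
  derivable_pt_lim (gq q) x ((-2 * x * (1 - q * x^2) + (1 - x^2) * (-2 * q * x)) / (2 * gq q x)).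
Proof.
  intros Hx. pose proof (one_sub_q_le x ltac:(lra)). assert (0 < 1 - x^2) by nra.
  eapply dlim_eq; [apply dlim_sqrt; [dlim_rational|apply Rmult_lt_0_compat; lra]|].
  cbv beta. pose proof (gq_pos x Hx). unfold gq in *. field. lra.
Qed.

(* The restriction x > -1/2 gives 3 gammaq q x >= 2 sqrt (1 - q). *)
Lemma kq_bound (x : R) : -1/2 < x < 1 -> Rabs (kq q x) <= 3 / sqrt (1 - q).
Proof.
  intros Hx. pose proof (one_sub_q_le x ltac:(lra)).
  pose proof (gammaq_pos x ltac:(lra)).
  assert (ha : 0 < sqrt (1 - q)) by (apply sqrt_lt_R0; lra).
  assert (Hnum : Rabs (1 - q * x - 2 * q * x^2) <= 2) by (apply Rabs_le; split; nra).
  assert (Hden : 2 * sqrt (1 - q) <= 3 * gammaq q x).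
  { unfold gammaq. rewrite <- (sqrt_square 2), <- (sqrt_square 3) by lra.
    rewrite <- !sqrt_mult; try nra. apply sqrt_le_1_alt. nra. }
  unfold kq. apply Rabs_div_le; [lra|].
  apply Rle_trans with 2; [exact Hnum|].
  apply (Rmult_le_reg_l (sqrt (1 - q))); [exact ha|].
  replace (sqrt (1 - q) * (3 / sqrt (1 - q) * gammaq q x)) with (3 * gammaq q x) by (field; lra).
  lra.
Qed.

Lemma gammaq_le (y : R) : -1 < y <= 1 -> sqrt (2 * (1 - q)) * gammaq q y <= 2 * (1 - q * y^2).
Proof.
  intros Hy. pose proof (one_sub_q_le y ltac:(lra)).
  unfold gammaq. rewrite <- sqrt_mult by (try apply Rmult_le_pos; lra).
  rewrite <- (sqrt_square (2 * (1 - q * y^2))) by lra. apply sqrt_le_1_alt.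
  assert ((1 - q) * (1 + y) <= 2 * (1 - q * y^2)) by nra.
  replace (2 * (1 - q) * ((1 + y) * (1 - q * y^2)))
    with (2 * ((1 - q) * (1 + y)) * (1 - q * y^2)) by ring.
  replace (2 * (1 - q * y^2) * (2 * (1 - q * y^2)))
    with (2 * (2 * (1 - q * y^2)) * (1 - q * y^2)) by ring.
  apply Rmult_le_compat_r; lra.
Qed.

Lemma gammaq_continuity_pt1 : continuity_pt (gammaq q) 1.
Proof. unfold gammaq. reg. nra. Qed.

Lemma kq_continuity_pt1 : continuity_pt (kq q) 1.
Proof.
  unfold kq. apply continuity_pt_div; [reg|apply gammaq_continuity_pt1|].
  pose proof (gammaq_pos 1 ltac:(lra)). lra.
Qed.

End GqFacts.

Definition dq (q : R) (S : R -> R) (x : R) : R := (gq q x - S x) / pow32 x.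

Section SqAsymptotics.
Variable q : R.
Hypothesis Hq : 0 <= q < 1.

Section WithSq.
Variable S : R -> R.
Hypothesis HS : is_Sq q S.

Lemma derivable_Sq (x : R) : -1 < x < 1 ->
  derivable_pt_lim S x (- ((1 - q * x^2) / gq q x)).
Proof.
  intros Hx. destruct HS as [_ [HD _]]. rewrite <- sqrt_Sq_integrand by auto. auto.
Qed.

Lemma lim_left1_Sq : lim_left1 S 0.
Proof.
  destruct HS as [_ [_ H]]. intros eps He. destruct (H eps He) as [d [Hd H']].
  exists d; split; auto. intros; rewrite Rminus_0_r; auto.
Qed.

Lemma derivable_gq_sub_Sq (x : R) : -1 < x < 1 ->
  derivable_pt_lim (fun y => gq q y - S y) x (sqrt (1 - x) * kq q x).
Proof.
  intros Hx.
  eapply dlim_eq; [apply derivable_pt_lim_minus; [apply derivable_gq|apply derivable_Sq]; auto|].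
  unfold kq. rewrite gq_split by (auto; lra).
  pose proof (sqrt_sqrt (1 - x) ltac:(lra)) as E.
  pose proof (sqrt_lt_R0 (1 - x) ltac:(lra)).
  pose proof (gammaq_pos q Hq x ltac:(lra)).
  set (s := sqrt (1 - x)) in *. set (G := gammaq q x) in *.
  replace (-2 * x * (1 - q * x^2) + (1 - x^2) * (-2 * q * x))
    with (2 * (s * s) * (1 - q * x - 2 * q * x^2) - 2 * (1 - q * x^2)) by (rewrite E; ring).
  field. lra.
Qed.

Lemma lim_left1_gq_sub_Sq : lim_left1 (fun y => gq q y - S y) 0.
Proof.
  rewrite <- (Rminus_0_r 0). apply lim_left1_minus; [|exact lim_left1_Sq].
  replace 0 with (gq q 1) by (unfold gq; rewrite <- sqrt_0; f_equal; ring).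
  apply lim_left1_continuity_pt. unfold gq. reg. nra.
Qed.

Lemma gq_sub_Sq_bound (x : R) : -1/2 < x < 1 ->
  Rabs (gq q x - S x) <= 2 / sqrt (1 - q) * pow32 x.
Proof.
  intros Hx. assert (0 < sqrt (1 - q)) by (apply sqrt_lt_R0; lra).
  replace (2 / sqrt (1 - q) * pow32 x) with (2/3 * (3 / sqrt (1 - q)) * pow32 x) by (field; lra).
  apply (abs_le_pow32_of_deriv_bound (fun y => gq q y - S y) (fun y => sqrt (1 - y) * kq q y) (-1/2));
    auto.
  - intros y Hy. apply derivable_gq_sub_Sq. lra.
  - intros y Hy. rewrite Rabs_mult, Rabs_pos_eq, Rmult_comm by apply sqrt_pos.
    apply Rmult_le_compat_r; [apply sqrt_pos|]. apply kq_bound; auto.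
  - exact lim_left1_gq_sub_Sq.
Qed.

Lemma Sq_lower_bound (x : R) : -1 < x < 1 -> sqrt (2 * (1 - q)) * sqrt (1 - x) <= S x.
Proof.
  intros Hx. set (c := sqrt (2 * (1 - q))).
  cut (0 <= S x + - c * sqrt (1 - x)); [lra|].
  apply (nonneg_of_deriv_nonpos_lim0 (fun y => S y + - c * sqrt (1 - y))
     (fun y => - ((1 - q * y^2) / gq q y) + - c * ((0 - 1) / (2 * sqrt (1 - y)))) (-1)); auto.
  - intros y Hy. apply derivable_pt_lim_plus; [apply derivable_Sq; auto|].
    eapply dlim_eq; [apply derivable_pt_lim_mult; [dlim_rational|apply dlim_sqrt; [dlim_rational|lra]]|].
    cbv beta. unfold Rminus. ring.
  - intros y Hy. rewrite gq_split by lra.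
    pose proof (one_sub_q_le q Hq y ltac:(lra)).
    assert (0 < sqrt (1 - y)) by (apply sqrt_lt_R0; lra).
    assert (0 < gammaq q y) by (apply gammaq_pos; auto; lra).
    pose proof (gammaq_le q Hq y ltac:(lra)) as Hc. fold c in Hc.
    set (s := sqrt (1 - y)) in *. set (G := gammaq q y) in *.
    replace (- ((1 - q * y^2) / (s * G)) + - c * ((0 - 1) / (2 * s)))
      with ((c * G - 2 * (1 - q * y^2)) / (2 * s * G)) by (field; lra).
    unfold Rdiv. assert (0 < / (2 * s * G)) by (apply Rinv_0_lt_compat; nra). nra.
  - rewrite <- (Rplus_0_r 0). apply lim_left1_plus; [exact lim_left1_Sq|].
    rewrite <- (Rmult_0_r (- c)). apply lim_left1_scal.
    replace 0 with (sqrt (1 - 1)) by (rewrite Rminus_diag; apply sqrt_0).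
    apply lim_left1_continuity_pt with (f := fun y => sqrt (1 - y)). reg. lra.
Qed.

Lemma Sq_pos (x : R) : -1 < x < 1 -> 0 < S x.
Proof.
  intros Hx. pose proof (Sq_lower_bound x Hx).
  assert (0 < sqrt (2 * (1 - q))) by (apply sqrt_lt_R0; lra).
  assert (0 < sqrt (1 - x)) by (apply sqrt_lt_R0; lra). nra.
Qed.

Lemma Sq_decreasing (x y : R) : -1 < x -> x < y -> y < 1 -> S y < S x.
Proof.
  intros Hx Hxy Hy.
  destruct (MVT_cor2 S (fun t => - ((1 - q * t^2) / gq q t)) x y Hxy) as [c [E Hc]].
  - intros c Hc. apply derivable_Sq; lra.
  - pose proof (one_sub_q_le q Hq c ltac:(lra)). pose proof (gq_pos q Hq c ltac:(lra)).
    assert (0 < (1 - q * c^2) / gq q c) by (apply Rdiv_lt_0_compat; lra). nra.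
Qed.

Lemma Sq_injective (x y : R) : -1 < x < 1 -> -1 < y < 1 -> S x = S y -> x = y.
Proof.
  intros Hx Hy E. destruct (Rtotal_order x y) as [h|[h|h]]; auto.
  - pose proof (Sq_decreasing x y ltac:(lra) h ltac:(lra)). lra.
  - pose proof (Sq_decreasing y x ltac:(lra) h ltac:(lra)). lra.
Qed.

Lemma Sq_continuity_pt (x : R) : -1 < x < 1 -> continuity_pt S x.
Proof. intros. apply derivable_continuous_pt. eexists. apply derivable_Sq; auto. Qed.

Lemma dq_bound (x : R) : -1/2 < x < 1 -> Rabs (dq q S x) <= 2 / sqrt (1 - q).
Proof.
  intros Hx. apply Rabs_div_le; [apply pow32_pos; lra|]. now apply gq_sub_Sq_bound.
Qed.

Lemma lim_left1_dq : lim_left1 (dq q S) (- (2/3) * kq q 1).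
Proof.
  intros eps He. set (k1 := kq q 1).
  destruct (lim_left1_continuity_pt _ (kq_continuity_pt1 q Hq) eps He) as [d [Hd Hk]].
  set (x0 := Rmax (1 - d) (-1/2)).
  pose proof (Rmax_l (1 - d) (-1/2)). pose proof (Rmax_r (1 - d) (-1/2)).
  assert (x0 < 1) by (unfold x0; apply Rmax_lub_lt; lra).
  exists (1 - x0). split; [lra|]. intros x Hx.
  assert (Habs : Rabs (gq q x - S x + 2/3 * k1 * pow32 x) <= 2/3 * eps * pow32 x).
  { apply (abs_le_pow32_of_deriv_bound (fun y => gq q y - S y + 2/3 * k1 * pow32 y)
      (fun y => sqrt (1 - y) * (kq q y - k1)) x0); [| | |lra].
    - intros y Hy. eapply dlim_eq.
      + apply derivable_pt_lim_plus; [apply derivable_gq_sub_Sq; unfold x0 in *; lra|].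
        apply derivable_pt_lim_mult; [dlim_rational|apply derivable_pow32; lra].
      + cbv beta; field.
    - intros y Hy. rewrite Rabs_mult, Rabs_pos_eq, Rmult_comm by apply sqrt_pos.
      apply Rmult_le_compat_r; [apply sqrt_pos|]. left; apply Hk; unfold x0 in *; lra.
    - rewrite <- (Rplus_0_r 0). apply lim_left1_plus; [exact lim_left1_gq_sub_Sq|].
      rewrite <- (Rmult_0_r (2/3 * k1)). apply lim_left1_scal, lim_left1_pow32. }
  pose proof (pow32_pos x ltac:(lra)).
  unfold dq. replace ((gq q x - S x) / pow32 x - - (2/3) * k1)
    with ((gq q x - S x + 2/3 * k1 * pow32 x) / pow32 x) by (field; lra).
  apply Rle_lt_trans with (2/3 * eps); [apply Rabs_div_le|]; lra.
Qed.

End WithSq.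

Lemma Sq_unique (S S' : R -> R) (x : R) : is_Sq q S -> is_Sq q S' -> -1 < x < 1 -> S' x = S x.
Proof.
  intros HS HS' Hx.
  assert (Hle : forall S1 S2, is_Sq q S1 -> is_Sq q S2 -> 0 <= S1 x - S2 x).
  { intros S1 S2 H1 H2.
    replace 0 with (- (2/3 * 0 * pow32 x)) by ring.
    apply (ge_neg_pow32_of_deriv_le (fun y => S1 y - S2 y) (fun _ => 0) (-1)); auto.
    - intros y Hy. eapply dlim_eq.
      + apply derivable_pt_lim_minus; [apply (derivable_Sq S1)|apply (derivable_Sq S2)]; auto.
      + ring.
    - intros y Hy. lra.
    - rewrite <- (Rminus_0_r 0).
      apply lim_left1_minus; [apply (lim_left1_Sq S1)|apply (lim_left1_Sq S2)]; auto. }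
  pose proof (Hle S S' HS HS'). pose proof (Hle S' S HS' HS). lra.
Qed.

End SqAsymptotics.

Definition Pq (q x : R) : R :=
  (-1 + 2 * q * (2 * x^2 - 1) / (1 - q * x^2)
      - 5 * q^2 * x^2 * (1 - x^2) / (1 - q * x^2)^2) / (4 * (1 - q * x^2)).
Definition Vreg (q x : R) : R := - (1 / (4 * ((1 - x^2) * (1 - q * x^2)))) + Pq q x.
Definition Vq (q s x : R) : R := 1 / (4 * s^2) + Vreg q x.
Definition Vq0 (q : R) : R := - (2/3) * kq q 1 / (2 * gammaq q 1 ^ 3) + Pq q 1.
Definition tq (q : R) (S : R -> R) (x : R) : R := gammaq q x - (1 - x) * dq q S x.

Lemma singular_part_bound (d g t b : R) :
  0 < b -> b <= g -> b <= t -> Rabs d <= 2 / b ->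
  Rabs (d * (g + t) / (4 * t^2 * g^2)) <= 1 / b^4.
Proof.
  intros Hb Hg Ht Hd.
  replace (d * (g + t) / (4 * t^2 * g^2)) with (d * (/ t * / g * / g + / t * / t * / g) / 4)
    by (field; lra).
  assert (0 < / t <= / b) by (split; [apply Rinv_0_lt_compat|apply Rinv_le_contravar]; lra).
  assert (0 < / g <= / b) by (split; [apply Rinv_0_lt_compat|apply Rinv_le_contravar]; lra).
  replace (2 / b) with (2 * / b) in Hd by (unfold Rdiv; ring).
  replace (1 / b^4) with (/ b * / b * / b * / b) by (field; lra).
  set (it := / t) in *. set (ig := / g) in *. set (ib := / b) in *.
  unfold Rdiv. rewrite !Rabs_mult, (Rabs_pos_eq (it * ig * ig + it * it * ig)), (Rabs_pos_eq (/ 4))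
    by (try apply Rlt_le, Rinv_0_lt_compat; nra).
  assert (it * ig * ig <= ib * ib * ib) by (apply Rmult_le_compat; try nra; apply Rmult_le_compat; lra).
  assert (it * it * ig <= ib * ib * ib) by (apply Rmult_le_compat; try nra; apply Rmult_le_compat; lra).
  pose proof (Rabs_pos d).
  assert (Rabs d * (it * ig * ig + it * it * ig) <= (2 * ib) * (2 * (ib * ib * ib)))
    by (apply Rmult_le_compat; nra).
  nra.
Qed.

(* Pq, written in the variables y = x^2 and t = 1/(1 - q y). *)
Lemma Pq_poly_bound (q y t : R) : 0 <= q < 1 -> 0 <= y <= 1 -> 1 <= t ->
  Rabs ((-1 + 2 * q * (2 * y - 1) * t - 5 * q^2 * y * (1 - y) * t^2) * t / 4) <= 2 * t^3.
Proof.
  intros Hq Hy Ht.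
  assert (Ha : -1 <= q * (2 * y - 1) <= 1) by (split; nra).
  assert (0 <= y * (1 - y) <= 1/4) by (pose proof (pow2_ge_0 (2 * y - 1)); split; nra).
  assert (0 <= q^2 <= 1) by (simpl; split; nra).
  assert (Hb : 0 <= q^2 * (y * (1 - y)) <= 1/4) by (split; nra).
  set (a := q * (2 * y - 1)) in *. set (b := q^2 * (y * (1 - y))) in *.
  replace ((-1 + 2 * q * (2 * y - 1) * t - 5 * q^2 * y * (1 - y) * t^2) * t / 4)
    with ((-1 + 2 * a * t - 5 * b * t^2) * (t / 4)) by (unfold a, b; field).
  assert (Hat : - t <= a * t <= t) by (split; nra).
  assert (Hbt : 0 <= b * t^2 <= t^2 / 4) by (simpl; split; nra).
  assert (HE : Rabs (-1 + 2 * a * t - 5 * b * t^2) <= 8 * t^2).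
  { assert (1 <= t^2) by (simpl; nra). apply Rabs_le. split; nra. }
  rewrite Rabs_mult, (Rabs_pos_eq (t / 4)) by lra.
  replace (2 * t^3) with (8 * t^2 * (t / 4)) by field.
  apply Rmult_le_compat_r; lra.
Qed.

Section PotentialBounds.
Variable q : R.
Hypothesis Hq : 0 <= q < 1.

Lemma Pq_bound (x : R) : -1 <= x <= 1 -> Rabs (Pq q x) <= 2 / (1 - q)^3.
Proof.
  intros Hx. pose proof (one_sub_q_le q Hq x Hx).
  set (t := / (1 - q * x^2)).
  assert (Ht : 1 <= t <= / (1 - q)).
  { unfold t. split; [|apply Rinv_le_contravar; lra].
    rewrite <- Rinv_1. apply Rinv_le_contravar; [lra|]. assert (0 <= q * x^2) by nra. lra. }
  replace (Pq q x)
    with ((-1 + 2 * q * (2 * x^2 - 1) * t - 5 * q^2 * x^2 * (1 - x^2) * t^2) * t / 4)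
    by (unfold Pq, t; field; lra).
  eapply Rle_trans; [apply Pq_poly_bound; auto; nra|].
  replace (2 / (1 - q)^3) with (2 * (/ (1 - q))^3) by (field; lra).
  apply Rmult_le_compat_l; [lra|]. apply pow_incr. lra.
Qed.

Lemma Pq_continuity_pt (x : R) : -1 <= x <= 1 -> continuity_pt (Pq q) x.
Proof. intros Hx. pose proof (one_sub_q_le q Hq x Hx). unfold Pq. reg; simpl in *; nra. Qed.

Lemma Vreg_continuity_pt (x : R) : -1 < x < 1 -> continuity_pt (Vreg q) x.
Proof.
  intros Hx. pose proof (one_sub_q_le q Hq x ltac:(lra)).
  unfold Vreg. apply continuity_pt_plus; [|apply Pq_continuity_pt; lra].
  reg. simpl in *.
  assert (0 < (1 - x * (x * 1)) * (1 - q * (x * (x * 1)))) by (apply Rmult_lt_0_compat; nra).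
  lra.
Qed.

Section WithSq.
Variable S : R -> R.
Hypothesis HS : is_Sq q S.

Lemma Sq_factor (x : R) : -1 < x < 1 -> S x = sqrt (1 - x) * tq q S x.
Proof.
  intros Hx. pose proof (sqrt_lt_R0 (1 - x) ltac:(lra)).
  unfold tq, dq, pow32. rewrite gq_split by (auto; lra).
  field. split; lra.
Qed.

Lemma tq_lower_bound (x : R) : -1 < x < 1 -> sqrt (2 * (1 - q)) <= tq q S x.
Proof.
  intros Hx. pose proof (sqrt_lt_R0 (1 - x) ltac:(lra)).
  apply (Rmult_le_reg_l (sqrt (1 - x))); auto.
  rewrite <- Sq_factor, Rmult_comm by auto. now apply Sq_lower_bound.
Qed.

Lemma Vq_Sq_eq (x : R) : -1 < x < 1 ->
  Vq q (S x) x
  = dq q S x * (gammaq q x + tq q S x) / (4 * tq q S x ^ 2 * gammaq q x ^ 2) + Pq q x.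
Proof.
  intros Hx.
  pose proof (gq_sq q Hq x ltac:(lra)) as Eg. rewrite gq_split in Eg by (auto; lra).
  pose proof (sqrt_lt_R0 (1 - x) ltac:(lra)). pose proof (gammaq_pos q Hq x ltac:(lra)).
  pose proof (tq_lower_bound x Hx). pose proof (sqrt_lt_R0 (2 * (1 - q)) ltac:(lra)).
  pose proof (sqrt_sqrt (1 - x) ltac:(lra)) as Es.
  assert (Ed : dq q S x = (gammaq q x - tq q S x) / (sqrt (1 - x) * sqrt (1 - x))).
  { rewrite Es. unfold tq. field. lra. }
  unfold Vq, Vreg. rewrite Sq_factor, <- Eg, Ed by auto.
  field. repeat split; lra.
Qed.

Lemma Vq_Sq_bound (x : R) : 0 <= x < 1 -> Rabs (Vq q (S x) x) <= 3 / (1 - q)^3.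
Proof.
  intros Hx. rewrite Vq_Sq_eq by lra.
  set (b := sqrt (1 - q)).
  assert (hb : 0 < b) by (apply sqrt_lt_R0; lra).
  assert (eb : b * b = 1 - q) by (apply sqrt_sqrt; lra).
  pose proof (one_sub_q_le q Hq x ltac:(lra)).
  assert (Hg : b <= gammaq q x) by (unfold b, gammaq; apply sqrt_le_1_alt; nra).
  assert (Ht : b <= tq q S x).
  { eapply Rle_trans; [|apply tq_lower_bound; lra]. apply sqrt_le_1_alt; lra. }
  pose proof (singular_part_bound _ _ _ b hb Hg Ht (dq_bound q Hq S HS x ltac:(lra))) as Hsing.
  replace (1 / b^4) with ((/ (1 - q))^2) in Hsing by (rewrite <- eb; field; lra).
  pose proof (Pq_bound x ltac:(lra)) as HP.
  replace (2 / (1 - q)^3) with (2 * (/ (1 - q))^3) in HP by (field; lra).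
  replace (3 / (1 - q)^3) with (3 * (/ (1 - q))^3) by (field; lra).
  assert (1 <= / (1 - q)) by (rewrite <- Rinv_1; apply Rinv_le_contravar; lra).
  assert ((/ (1 - q))^2 <= (/ (1 - q))^3) by (simpl; nra).
  eapply Rle_trans; [apply Rabs_triang|]. lra.
Qed.

Lemma lim_left1_Vq_Sq : lim_left1 (fun x => Vq q (S x) x) (Vq0 q).
Proof.
  set (d1 := - (2/3) * kq q 1). set (g1 := gammaq q 1).
  assert (hg1 : 0 < g1) by (apply gammaq_pos; auto; lra).
  assert (Ld : lim_left1 (dq q S) d1) by now apply lim_left1_dq.
  assert (Lg : lim_left1 (gammaq q) g1) by (apply lim_left1_continuity_pt, gammaq_continuity_pt1; auto).
  assert (Lt : lim_left1 (tq q S) g1).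
  { replace g1 with (g1 - (1 - 1) * d1) by ring.
    apply lim_left1_minus; [exact Lg|]. apply lim_left1_mult; [|exact Ld].
    apply lim_left1_continuity_pt with (f := fun x => 1 - x). reg. }
  assert (Lden : lim_left1 (fun x => / (4 * tq q S x ^ 2 * gammaq q x ^ 2)) (/ (4 * g1^2 * g1^2))).
  { assert (0 < g1 ^ 2) by (apply pow_lt; lra).
    apply lim_left1_inv; [|apply Rgt_not_eq, Rmult_lt_0_compat; [apply Rmult_lt_0_compat|]; lra].
    apply lim_left1_mult; [apply lim_left1_scal|]; now apply lim_left1_sqr. }
  assert (LP : lim_left1 (Pq q) (Pq q 1)) by (apply lim_left1_continuity_pt, Pq_continuity_pt; lra).
  replace (Vq0 q) with (d1 * (g1 + g1) * / (4 * g1^2 * g1^2) + Pq q 1)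
    by (unfold Vq0; fold d1 g1; field; lra).
  apply lim_left1_ext with
    (fun x => dq q S x * (gammaq q x + tq q S x) * / (4 * tq q S x ^ 2 * gammaq q x ^ 2) + Pq q x).
  { intros x Hx. rewrite Vq_Sq_eq by lra. reflexivity. }
  apply lim_left1_plus; [|exact LP].
  apply lim_left1_mult; [apply lim_left1_mult; [exact Ld|apply lim_left1_plus]|]; assumption.
Qed.

End WithSq.
End PotentialBounds.

Lemma inverse_of_increasing_derivable (f f' g : R -> R) (a b y : R) :
  a < b ->
  (forall x, a <= x <= b -> derivable_pt_lim f x (f' x)) ->
  (forall x z, a <= x -> x < z -> z <= b -> f x < f z) ->
  (forall t, f a <= t <= f b -> a <= g t <= b /\ f (g t) = t) ->
  f a < y < f b -> f' (g y) <> 0 ->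
  continuity_pt g y /\ derivable_pt_lim g y (/ f' (g y)).
Proof.
  intros Hab Hd Hincr Hg Hy Hnz.
  assert (Hinj : forall x z, a <= x <= b -> a <= z <= b -> f x = f z -> x = z).
  { intros x z Hx Hz E. destruct (Rtotal_order x z) as [c|[c|c]]; auto.
    - pose proof (Hincr x z ltac:(lra) c ltac:(lra)). lra.
    - pose proof (Hincr z x ltac:(lra) c ltac:(lra)). lra. }
  assert (Hga : g (f a) = a) by (destruct (Hg (f a)) as [? E]; [lra|]; apply Hinj; auto; lra).
  assert (Hgb : g (f b) = b) by (destruct (Hg (f b)) as [? E]; [lra|]; apply Hinj; auto; lra).
  assert (Hgc : continuity_pt g y).
  { apply (continuity_pt_recip_interv f g a b Hab Hincr); try lra.
    - intros t Ht1 Ht2. apply (Hg t). lra.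
    - intros t Ht1 Ht2. apply (Hg t). lra.
    - intros x Hx. apply derivable_continuous_pt. eexists. now apply Hd. }
  split; [exact Hgc|].
  assert (Prf : forall x, g (f a) <= x <= g (f b) -> derivable_pt f x).
  { intros x Hx. rewrite Hga, Hgb in Hx. eexists. now apply Hd. }
  assert (Hgy : g (f a) <= g y <= g (f b)) by (rewrite Hga, Hgb; apply Hg; lra).
  assert (Hder : derive_pt f (g y) (Prf (g y) Hgy) = f' (g y)).
  { apply derive_pt_eq_0, Hd. apply Hg. lra. }
  pose proof (derivable_pt_lim_recip_interv f g (f a) (f b) y Prf Hgc
      ltac:(lra) Hy Hgy ltac:(intros t Ht; apply (Hg t); lra)) as Hrec.
  rewrite Hder in Hrec. specialize (Hrec Hnz).
  eapply dlim_eq; [exact Hrec|]. field. exact Hnz.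
Qed.

Lemma inverse_of_decreasing_derivable (f f' g : R -> R) (a b y : R) :
  a < b ->
  (forall x, a <= x <= b -> derivable_pt_lim f x (f' x)) ->
  (forall x z, a <= x -> x < z -> z <= b -> f z < f x) ->
  (forall t, f b <= t <= f a -> a <= g t <= b /\ f (g t) = t) ->
  f b < y < f a -> f' (g y) <> 0 ->
  continuity_pt g y /\ derivable_pt_lim g y (/ f' (g y)).
Proof.
  intros Hab Hd Hdecr Hg Hy Hnz.
  assert (Hgopp : forall u, g (- - u) = g u) by (intros; now rewrite Ropp_involutive).
  destruct (inverse_of_increasing_derivable
              (fun x => - f x) (fun x => - f' x) (fun t => g (- t)) a b (- y))
    as [Hc Hder]; cbv beta; try lra.
  - intros x Hx. apply (derivable_pt_lim_opp f). auto.
  - intros x z Hx Hxz Hz. pose proof (Hdecr x z Hx Hxz Hz). lra.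
  - intros t Ht. destruct (Hg (- t)) as [? E]; [lra|]. split; [auto|]. rewrite E. ring.
  - rewrite Hgopp. lra.
  - assert (Hopp : derivable_pt_lim (fun u => - u) y (-1)).
    { apply (derivable_pt_lim_opp (fun u => u)), derivable_pt_lim_id. }
    rewrite Hgopp in Hder. split.
    + apply continuity_pt_locally_ext with (fun u => g (- - u)) 1; [lra|intros; apply Hgopp|].
      apply (continuity_pt_comp (fun u => - u) (fun t => g (- t))); [|exact Hc].
      apply derivable_continuous_pt. eexists. exact Hopp.
    + apply derivable_pt_lim_ext with (fun u => g (- - u)); [apply Hgopp|].
      eapply dlim_eq.
      * apply (derivable_pt_lim_comp (fun u => - u) (fun t => g (- t)) y); [exact Hopp|exact Hder].
      * field. exact Hnz.
Qed.

(* Any left endpoint below 0 would do; it makes Sinv S differentiable at S 0. *)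
Definition Sinv (S : R -> R) (s : R) : R :=
  epsilon (inhabits 0) (fun x => -1/2 <= x < 1 /\ S x = s).

Section SqInverse.
Variable q : R.
Hypothesis Hq : 0 <= q < 1.
Variable S : R -> R.
Hypothesis HS : is_Sq q S.

Lemma Sq_surjective (s : R) : 0 < s <= S (-1/2) -> exists x, -1/2 <= x < 1 /\ S x = s.
Proof.
  intros Hs.
  destruct (Req_dec s (S (-1/2))) as [E|Ne]; [exists (-1/2); split; [lra|auto]|].
  destruct (lim_left1_Sq q S HS s ltac:(lra)) as [d [Hd Hd']].
  set (x1 := Rmax (1 - d/2) 0).
  pose proof (Rmax_l (1 - d/2) 0). pose proof (Rmax_r (1 - d/2) 0).
  assert (x1 < 1) by (unfold x1; apply Rmax_lub_lt; lra).
  specialize (Hd' x1 ltac:(unfold x1 in *; lra)). rewrite Rminus_0_r in Hd'. apply Rabs_def2 in Hd'.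
  destruct (IVT_interv (fun t => s - S t) (-1/2) x1) as [z [Hz Ez]]; cbv beta.
  - intros a Ha. apply continuity_pt_minus; [apply continuity_pt_const; intros u v; auto|].
    apply (Sq_continuity_pt q Hq S HS). unfold x1 in *; lra.
  - unfold x1 in *; lra.
  - lra.
  - lra.
  - exists z. split; [lra|]. lra.
Qed.

Lemma Sinv_spec (s : R) : 0 < s <= S (-1/2) -> -1/2 <= Sinv S s < 1 /\ S (Sinv S s) = s.
Proof. intros Hs. unfold Sinv. apply epsilon_spec, Sq_surjective, Hs. Qed.

Lemma Sinv_Sq (x : R) : -1/2 <= x < 1 -> Sinv S (S x) = x.
Proof.
  intros Hx.
  assert (Hr : 0 < S x <= S (-1/2)).
  { split; [apply (Sq_pos q Hq S HS); lra|].
    destruct (Req_dec x (-1/2)) as [->|Ne]; [lra|]. left; apply (Sq_decreasing q Hq S HS); lra. }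
  destruct (Sinv_spec (S x) Hr). apply (Sq_injective q Hq S HS); auto; lra.
Qed.

Lemma Sinv_le (s x : R) : 0 < s <= S (-1/2) -> -1/2 <= x < 1 -> S x <= s -> Sinv S s <= x.
Proof.
  intros Hs Hx Hle. destruct (Sinv_spec s Hs) as [? E].
  destruct (Rle_or_lt (Sinv S s) x) as [h|h]; auto.
  pose proof (Sq_decreasing q Hq S HS x (Sinv S s) ltac:(lra) h ltac:(lra)). lra.
Qed.

Lemma Sinv_nonneg (s : R) : 0 < s <= S 0 -> 0 <= Sinv S s.
Proof.
  intros Hs. pose proof (Sq_decreasing q Hq S HS (-1/2) 0 ltac:(lra) ltac:(lra) ltac:(lra)).
  destruct (Sinv_spec s ltac:(lra)) as [? E].
  destruct (Rle_or_lt 0 (Sinv S s)) as [h|h]; auto.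
  pose proof (Sq_decreasing q Hq S HS (Sinv S s) 0 ltac:(lra) h ltac:(lra)). lra.
Qed.

Lemma Sinv_derivable (s : R) : 0 < s < S (-1/2) ->
  continuity_pt (Sinv S) s /\
  derivable_pt_lim (Sinv S) s (- gq q (Sinv S s) / (1 - q * Sinv S s ^ 2)).
Proof.
  intros Hs. destruct (Sinv_spec s ltac:(lra)) as [Hx Es].
  set (b := (Sinv S s + 1) / 2).
  assert (Hb : Sinv S s < b < 1) by (unfold b; lra).
  assert (Sb : S b < s) by (rewrite <- Es; apply (Sq_decreasing q Hq S HS); lra).
  pose proof (Sq_pos q Hq S HS b ltac:(lra)).
  pose proof (one_sub_q_le q Hq (Sinv S s) ltac:(lra)). pose proof (gq_pos q Hq (Sinv S s) ltac:(lra)).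
  destruct (inverse_of_decreasing_derivable S (fun x => - ((1 - q * x^2) / gq q x)) (Sinv S) (-1/2) b s)
    as [Hc Hd]; [lra| | | |lra| |].
  - intros x Hx'. apply (derivable_Sq q Hq S HS). lra.
  - intros x z Hx' Hxz Hz. apply (Sq_decreasing q Hq S HS); lra.
  - intros t Ht. destruct (Sinv_spec t ltac:(lra)) as [? E]. split; [split|]; auto; try lra.
    apply Sinv_le; lra.
  - apply Rlt_not_eq. apply Ropp_lt_gt_0_contravar. apply Rdiv_lt_0_compat; lra.
  - split; auto. eapply dlim_eq; [exact Hd|]. field. lra.
Qed.

End SqInverse.

Definition phi_inv (q x : R) : R := exp (/4 * ln (1 - x^2) + /4 * ln (1 - q * x^2)).
Definition phi_inv_logder (q x : R) : R := - (1/2) * x * (1 / (1 - x^2) + q / (1 - q * x^2)).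

Lemma phi_mul_phi_inv (q x : R) : phi q x * phi_inv q x = 1.
Proof. unfold phi, phi_inv, Rpower. rewrite <- !exp_plus, <- exp_0. f_equal. field. Qed.

Section LiouvilleStep.
Variable q : R.
Hypothesis Hq : 0 <= q < 1.

Lemma derivable_phi_inv (x : R) : -1 < x < 1 ->
  derivable_pt_lim (phi_inv q) x (phi_inv q x * phi_inv_logder q x).
Proof.
  intros Hx. pose proof (one_sub_q_le q Hq x ltac:(lra)). assert (0 < 1 - x^2) by nra.
  eapply dlim_eq.
  - apply (derivable_pt_lim_comp _ exp); [|apply derivable_pt_lim_exp].
    apply derivable_pt_lim_plus;
      (apply derivable_pt_lim_mult; [dlim_rational|apply dlim_ln; [dlim_rational|lra]]).
  - unfold phi_inv_logder, phi_inv. cbv beta. field. lra.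
Qed.

Lemma derivable_phi_inv_logder (x : R) : -1 < x < 1 ->
  derivable_pt_lim (phi_inv_logder q) x
    (- (1/2) * (/ (1 - x^2) + q / (1 - q * x^2))
     - x^2 * (/ (1 - x^2)^2 + q^2 / (1 - q * x^2)^2)).
Proof.
  intros Hx. pose proof (one_sub_q_le q Hq x ltac:(lra)). assert (0 < 1 - x^2) by nra.
  eapply dlim_eq.
  - apply derivable_pt_lim_mult; [dlim_rational|].
    apply derivable_pt_lim_plus; apply derivable_pt_lim_div; dlim_rational; lra.
  - cbv beta. unfold Rsqr. field. lra.
Qed.

Lemma derivable_gq_logder (x : R) : -1 < x < 1 ->
  derivable_pt_lim (gq q) x (2 * phi_inv_logder q x * gq q x).
Proof.
  intros Hx. pose proof (one_sub_q_le q Hq x ltac:(lra)). assert (0 < 1 - x^2) by nra.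
  pose proof (gq_pos q Hq x Hx).
  eapply dlim_eq; [apply derivable_gq; auto|].
  replace (2 * phi_inv_logder q x * gq q x)
    with (2 * phi_inv_logder q x * (gq q x * gq q x) / gq q x) by (field; lra).
  rewrite gq_sq by lra. unfold phi_inv_logder. field. repeat split; lra.
Qed.

(* dU/ds at s = S_q(x), for U = psi * phi_inv written in the variable x. *)
Definition Uprime (q : R) (psi psi' : R -> R) (x : R) : R :=
  - (psi' x * phi_inv q x + psi x * (phi_inv q x * phi_inv_logder q x)) * gq q x / (1 - q * x^2).

Lemma liouville_step (chi : R) (psi psi' psi'' : R -> R) (x : R) :
  -1 < x < 1 ->
  derivable_pt_lim psi x (psi' x) -> derivable_pt_lim psi' x (psi'' x) ->
  (1 - x^2) * psi'' x - 2 * x * psi' x + chi * (1 - q * x^2) * psi x = 0 ->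
  derivable_pt_lim (Uprime q psi psi') x
    ((Vreg q x - chi) * (psi x * phi_inv q x) * (- (1 - q * x^2) / gq q x)).
Proof.
  intros Hx Hpsi Hpsi' Hode.
  pose proof (one_sub_q_le q Hq x ltac:(lra)). assert (0 < 1 - x^2) by nra.
  pose proof (gq_pos q Hq x Hx).
  assert (Epsi'' : psi'' x = (2 * x * psi' x - chi * (1 - q * x^2) * psi x) / (1 - x^2))
    by (apply (Rmult_eq_reg_l (1 - x^2)); [field_simplify; lra|lra]).
  replace (- (1 - q * x^2) / gq q x) with (- gq q x / (1 - x^2))
    by (rewrite !Rdiv_opp_l, div_gq_eq; auto).
  eapply dlim_eq.
  - apply derivable_pt_lim_div; [|dlim_rational|lra].
    apply derivable_pt_lim_mult; [|apply derivable_gq_logder; auto].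
    apply derivable_pt_lim_opp, derivable_pt_lim_plus; apply derivable_pt_lim_mult;
      [exact Hpsi'|apply derivable_phi_inv; auto|exact Hpsi|].
    apply derivable_pt_lim_mult; [apply derivable_phi_inv|apply derivable_phi_inv_logder]; auto.
  - cbv beta. rewrite Epsi''. unfold Vreg, Pq, phi_inv_logder, Rsqr.
    field. repeat split; lra.
Qed.

End LiouvilleStep.

(* S_q is unique on (-1,1) (Sq_unique); Sq q is S_q whenever S_q exists. *)
Definition Sq (q : R) : R -> R := epsilon (inhabits (fun _ => 0)) (is_Sq q).

Definition Fq (q s : R) : R := if Rle_dec s 0 then Vq0 q else Vq q s (Sinv (Sq q) s).

Section PotentialFq.
Variable q : R.
Hypothesis Hq : 0 <= q < 1.
Variable S : R -> R.
Hypothesis HS : is_Sq q S.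

Lemma Sq_0_lt_Sq_half : S 0 < S (-1/2).
Proof. apply (Sq_decreasing q Hq S HS); lra. Qed.

Lemma Fq_eq (s : R) : 0 < s <= S 0 -> Fq q s = Vq q s (Sinv S s).
Proof.
  intros Hs. unfold Fq. destruct (Rle_dec s 0) as [h|_]; [lra|].
  assert (HSq : is_Sq q (Sq q)) by (unfold Sq; apply epsilon_spec; now exists S).
  pose proof Sq_0_lt_Sq_half.
  assert (Hs' : 0 < s <= Sq q (-1/2)) by (rewrite (Sq_unique q Hq S (Sq q)) by (auto; lra); lra).
  destruct (Sinv_spec q Hq (Sq q) HSq s Hs') as [Hx Ex].
  set (x := Sinv (Sq q) s) in *. replace (Sinv S s) with x; [reflexivity|].
  rewrite <- Ex, (Sq_unique q Hq S (Sq q) x) by (auto; lra).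
  symmetry. apply (Sinv_Sq q Hq S HS). exact Hx.
Qed.

Lemma Fq_bound (s : R) : 0 <= s <= S 0 -> Rabs (Fq q s) <= 3 / (1 - q)^3.
Proof.
  intros Hs. destruct (Req_dec s 0) as [->|Hne].
  - unfold Fq. destruct (Rle_dec 0 0) as [_|]; [|lra].
    apply (lim_left1_abs_le _ _ _ (lim_left1_Vq_Sq q Hq S HS)).
    intros x Hx. apply Vq_Sq_bound; auto; lra.
  - pose proof Sq_0_lt_Sq_half. rewrite Fq_eq by lra.
    destruct (Sinv_spec q Hq S HS s ltac:(lra)) as [Hx Ex].
    rewrite <- Ex at 1. apply Vq_Sq_bound; auto.
    split; [apply (Sinv_nonneg q Hq S HS); lra|lra].
Qed.

Lemma Vq_Sinv_continuity_pt (s : R) : 0 < s < S (-1/2) ->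
  continuity_pt (fun s => Vq q s (Sinv S s)) s.
Proof.
  intros Hs. destruct (Sinv_spec q Hq S HS s ltac:(lra)) as [Hx _].
  destruct (Sinv_derivable q Hq S HS s Hs) as [Hc _].
  unfold Vq. apply continuity_pt_plus.
  - reg. apply Rgt_not_eq. simpl. nra.
  - apply (continuity_pt_comp (Sinv S) (Vreg q)); [exact Hc|]. apply Vreg_continuity_pt; auto; lra.
Qed.

(* Near s = 0 the point Sinv S s is near 1, where Vq q (S x) x tends to Vq0 q. *)
Lemma Fq_right_continuous_0 (eps : R) : eps > 0 ->
  exists d, d > 0 /\ forall s, 0 <= s <= S 0 -> Rabs (s - 0) < d -> Rabs (Fq q s - Fq q 0) < eps.
Proof.
  intros He. destruct (lim_left1_Vq_Sq q Hq S HS eps He) as [d [Hd Hd']].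
  pose proof (Rmax_l (1 - d/2) 0). pose proof (Rmax_r (1 - d/2) 0).
  set (x1 := Rmax (1 - d/2) 0) in *.
  assert (x1 < 1) by (unfold x1; apply Rmax_lub_lt; lra).
  pose proof (Sq_pos q Hq S HS x1 ltac:(lra)). pose proof Sq_0_lt_Sq_half.
  assert (F0 : Fq q 0 = Vq0 q) by (unfold Fq; destruct (Rle_dec 0 0); [auto|lra]).
  exists (S x1). split; [lra|]. intros s Hs Hsd. rewrite F0.
  destruct (Req_dec s 0) as [->|Hne]; [rewrite F0, Rminus_diag, Rabs_R0; lra|].
  rewrite Rminus_0_r, Rabs_pos_eq in Hsd by lra.
  rewrite Fq_eq by lra. destruct (Sinv_spec q Hq S HS s ltac:(lra)) as [Hx Ex].
  assert (x1 < Sinv S s).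
  { destruct (Rle_or_lt (Sinv S s) x1) as [h|h]; auto.
    destruct (Req_dec (Sinv S s) x1) as [e|e]; [rewrite e in Ex; lra|].
    pose proof (Sq_decreasing q Hq S HS (Sinv S s) x1 ltac:(lra) ltac:(lra) ltac:(lra)). lra. }
  rewrite <- Ex at 1. apply Hd'. lra.
Qed.

Lemma Fq_cont_on_closed : cont_on_closed (Fq q) 0 (S 0).
Proof.
  intros s0 Hs0 eps He. destruct (Req_dec s0 0) as [->|Hne]; [now apply Fq_right_continuous_0|].
  pose proof Sq_0_lt_Sq_half.
  destruct (Vq_Sinv_continuity_pt s0 ltac:(lra) eps He) as [d [Hd Hd']].
  exists (Rmin d s0). split; [apply Rmin_pos; lra|]. intros s Hs Hsd.
  pose proof (Rmin_l d s0). pose proof (Rmin_r d s0).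
  destruct (Req_dec s s0) as [->|Hne']; [rewrite Rminus_diag, Rabs_R0; lra|].
  assert (0 < s) by (apply Rabs_def2 in Hsd; lra).
  rewrite !Fq_eq by lra. apply Hd'. split; [split; [exact I|auto]|]. simpl; unfold Rdist. lra.
Qed.

Section Transform.
Variables psi psi' U : R -> R.
Hypothesis Hrel : forall x, -1 < x < 1 -> psi x = phi q x * U (S x).

Lemma U_eq_Sinv (s : R) : 0 < s <= S (-1/2) -> U s = psi (Sinv S s) * phi_inv q (Sinv S s).
Proof.
  intros Hs. destruct (Sinv_spec q Hq S HS s Hs) as [Hx Ex].
  rewrite Hrel, Ex by lra.
  transitivity (U s * (phi q (Sinv S s) * phi_inv q (Sinv S s))); [|ring].
  rewrite phi_mul_phi_inv. ring.
Qed.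

Lemma derivable_U (s : R) : 0 < s < S (-1/2) ->
  derivable_pt_lim psi (Sinv S s) (psi' (Sinv S s)) ->
  derivable_pt_lim U s (Uprime q psi psi' (Sinv S s)).
Proof.
  intros Hs Dpsi. destruct (Sinv_spec q Hq S HS s ltac:(lra)) as [Hx _].
  pose proof (one_sub_q_le q Hq (Sinv S s) ltac:(lra)).
  apply (derivable_pt_lim_locally_ext (fun y => psi (Sinv S y) * phi_inv q (Sinv S y)) U s 0 (S (-1/2)));
    [lra|intros; symmetry; apply U_eq_Sinv; lra|].
  eapply dlim_eq.
  - apply (derivable_pt_lim_comp (Sinv S) (fun y => psi y * phi_inv q y)).
    + apply (Sinv_derivable q Hq S HS s Hs).
    + apply derivable_pt_lim_mult; [exact Dpsi|apply derivable_phi_inv; auto; lra].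
  - unfold Uprime. field. lra.
Qed.

End Transform.

Lemma liouville_ode (c chi : R) (psi U : R -> R) :
  pswf_ode c chi psi -> c^2 = chi * q ->
  (forall x, -1 < x < 1 -> psi x = phi q x * U (S x)) ->
  exists U' U'' : R -> R,
    (exists eps, eps > 0 /\ forall s, 0 < s < S 0 + eps -> derivable_pt_lim U s (U' s)) /\
    (forall s, 0 < s <= S 0 ->
       derivable_pt_lim U' s (U'' s) /\
       U'' s + (chi + 1 / (4 * s^2)) * U s = Fq q s * U s).
Proof.
  intros [psi' [psi'' Hode]] Hc Hrel.
  pose proof Sq_0_lt_Sq_half.
  exists (fun s => Uprime q psi psi' (Sinv S s)), (fun s => (Fq q s - chi - 1 / (4 * s^2)) * U s).
  split.
  - exists (S (-1/2) - S 0). split; [lra|]. intros s Hs.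
    destruct (Sinv_spec q Hq S HS s ltac:(lra)) as [Hx _].
    apply derivable_U; auto; [lra|]. apply Hode. lra.
  - intros s Hs. destruct (Sinv_spec q Hq S HS s ltac:(lra)) as [Hx _].
    destruct (Hode (Sinv S s) ltac:(lra)) as [Dpsi [Dpsi' Eode]].
    pose proof (one_sub_q_le q Hq (Sinv S s) ltac:(lra)). pose proof (gq_pos q Hq (Sinv S s) ltac:(lra)).
    split; [|ring].
    eapply dlim_eq.
    + apply (derivable_pt_lim_comp (Sinv S) (Uprime q psi psi')).
      * apply (Sinv_derivable q Hq S HS s). lra.
      * apply (liouville_step q Hq chi psi psi' psi''); auto; [lra|]. rewrite <- Eode, Hc. ring.
    + rewrite Fq_eq, (U_eq_Sinv psi U) by (auto; lra). unfold Vq. field. lra.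
Qed.

End PotentialFq.

Theorem lemma2 :
  exists F : R -> R -> R,
  forall (c : R) (n : nat) (chi : R) (psi S U : R -> R),
    0 <= c ->
    is_pswf c n chi psi ->
    0 < chi ->
    c^2 / chi < 1 ->
    is_Sq (c^2 / chi) S ->
    (forall x, -1 < x < 1 -> psi x = phi (c^2 / chi) x * U (S x)) ->
    cont_on_closed (F (c^2 / chi)) 0 (S 0) /\
    (forall s, 0 <= s <= S 0 -> Rabs (F (c^2 / chi) s) <= 3 / (1 - c^2 / chi)^3) /\
    exists U' U'' : R -> R,
      (exists eps, eps > 0 /\
         forall s, 0 < s < S 0 + eps -> derivable_pt_lim U s (U' s)) /\
      (forall s, 0 < s <= S 0 ->
         derivable_pt_lim U' s (U'' s) /\
         U'' s + (chi + 1 / (4 * s^2)) * U s = F (c^2 / chi) s * U s).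
Proof.
  exists Fq.
  intros c n chi psi S U _ [_ [Hode _]] Hchi Hq1 HS Hrel.
  assert (Hq : 0 <= c^2 / chi < 1).
  { split; [|exact Hq1]. apply Rmult_le_pos; [apply pow2_ge_0|left; apply Rinv_0_lt_compat, Hchi]. }
  split; [|split].
  - exact (Fq_cont_on_closed _ Hq S HS).
  - exact (Fq_bound _ Hq S HS).
  - apply (liouville_ode _ Hq S HS c chi psi U Hode); [field; lra|exact Hrel].
Qed.
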